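(* Let $D_M>0$ be a constant such that for every $n\in\mathbb N$ and all $x_1,\dots,x_n\in T^*$ with pairwise disjoint supports and $\min\operatorname{supp}(x_k)\ge n$ one has $\|\sum_kx_k\|_{T^*}\le D_M\max_k\|x_k\|_{T^*}$. Let $k\in\mathbb N$ and $k=n_0<n_1<\dots<n_k$. For $j=0,1,\dots,k$ put $R_j=(k,n_j]\times[1,n_j]\subset\mathbb N^2$, and for $j=1,\dots,k$ let $z_j\in P_{R_j\setminus R_{j-1}}(T^*(T^* ))$ with $\|z_j\|\le1$. Then for all scalars $(a_j)_{j=1}^k$, $$\Big\|\sum_{j=1}^ka_jz_j\Big\|\le 3D_M\max_{1\le j\le k}|a_j|.$$
   Context: $T^*$ is the dual of Tsirelson's space $T$ (completion of $c_{00}$ under $\|x\|_T=\max\{\|x\|_\infty,\frac12\sup\sum_{j=1}^n\|E_j(x)\|_T\}$, supremum over $n$ and finite sets $n\le E_1<\dots<E_n$), with $1$-unconditional basis $(e_j)$. $T^*(T^* )$ is the space of sequences $(x_i)$ in $T^*$ with $\sum\|x_i\|e_i$ convergent in $T^*$, normed by $\|(x_i)\|=\|\sum_i\|x_i\|e_i\|_{T^*}$. The $i$-th component is the $i$-th copy of $T^*$, with basis $(e^{(i)}_s)_s$. For $R\subset\mathbb N^2$, $P_R$ is the norm-one projection $\sum_{i,s}a_{(i,s)}e^{(i)}_s\mapsto\sum_{(i,s)\in R}a_{(i,s)}e^{(i)}_s$ (first coordinate = component index $i$, second = basis index $s$). Intervals are in $\mathbb N$. *)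

From HB Require Import structures.
From mathcomp Require Import all_boot all_order all_algebra.
From mathcomp Require Import all_classical all_reals all_analysis.

Set Implicit Arguments.
Unset Strict Implicit.
Unset Printing Implicit Defensive.

Import Order.TTheory GRing.Theory Num.Theory.
Local Open Scope ring_scope.
Local Open Scope classical_set_scope.

(* INDEXING CONVENTION: a vector is x : nat -> R, and the Rocq coordinate i
   corresponds to the paper's coordinate i+1 (paper indices start at 1). *)

Section Tsirelson.
Variable R : realType.

Definition vec := nat -> R.

Definition restr (E : seq nat) (x : vec) : vec :=
  fun i => if i \in E then x i else 0.

Definition norm_inf (x : vec) : R := sup [set `|x i| | i in [set: nat]].

(* (E_1,...,E_n) admissible: n <= E_1 < E_2 < ... < E_n (paper indices,
   i.e. Rocq element e is paper index e+1). *)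
Definition admissible (Es : seq (seq nat)) : Prop :=
  (forall E, E \in Es -> forall e, e \in E -> (size Es <= e.+1)%N) /\
  (forall j1 j2, (j1 < j2 < size Es)%N ->
     forall a b, a \in nth [::] Es j1 -> b \in nth [::] Es j2 -> (a < b)%N).

(* Standard iterative construction of the Tsirelson norm on c00:
   |x|_0 = |x|_oo, |x|_{m+1} = max(|x|_oo, 1/2 sup sum_j |E_j x|_m);
   |x|_T = sup_m |x|_m (the unique solution of the implicit equation). *)
Fixpoint normT_iter (m : nat) (x : vec) : R :=
  match m with
  | 0%N => norm_inf x
  | m'.+1 => Num.max (norm_inf x)
      (2^-1 * sup [set \sum_(E <- Es) normT_iter m' (restr E x) | Es in admissible])
  end.

Definition normT (x : vec) : R := sup [set normT_iter m x | m in [set: nat]].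

Definition Ts_set (y : vec) : set R :=
  [set `| \sum_(i < p.1) p.2 i * y i | | p in
     [set p : nat * vec | (forall i, (p.1 <= i)%N -> p.2 i = 0) /\ normT p.2 <= 1]].

(* dual norm of Tstar and membership in Tstar = dual of T *)
Definition normTs (y : vec) : R := sup (Ts_set y).
Definition inTs (y : vec) : Prop := has_ubound (Ts_set y).

Definition partial (N : nat) (v : vec) : vec := fun i => if (i < N)%N then v i else 0.

(* membership in Tstar(Tstar): sequences (w_i) in Tstar with sum_i |w_i| e_i convergent in Tstar *)
Definition inTTs (w : nat -> vec) : Prop :=
  (forall i, inTs (w i)) /\
  exists u : vec, inTs u /\
    ((fun N => normTs (fun i => u i - partial N (fun l => normTs (w l)) i)) : nat -> R) @ \oo --> 0.

Definition normTTs (w : nat -> vec) : R := normTs (fun i => normTs (w i)).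

(* P_Rs : first coordinate = component index, second = basis index *)
Definition PR (Rs : nat -> nat -> bool) (w : nat -> vec) : nat -> vec :=
  fun i s => if Rs i s then w i s else 0.

Definition in_PR_TTs (Rs : nat -> nat -> bool) (z : nat -> vec) : Prop :=
  exists w, inTTs w /\ z = PR Rs w.

End Tsirelson.

(* R_box k m = (k, m] x [1, m] in paper indices (shifted by one). *)
Definition Rbox (k m : nat) (i s : nat) : bool := (k <= i < m)%N && (s < m)%N.

From HB Require Import structures.
From mathcomp Require Import all_boot all_order all_algebra.
From mathcomp Require Import all_classical all_reals all_analysis.
From mathcomp Require Import zify.

(* Split each z_j into its part in the new rows (n_{j-1}, n_j] and its part in the
   old rows, which then lies in the new columns (n_{j-1}, n_j].  The new-row parts of
   different z_j have disjoint supports in the outer T^*, with rows beyond k, so the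
   hypothesis on D_M bounds their sum by D_M max |a_j|.  In a fixed row, the old-row
   parts sit on the column blocks (n_{j-1}, n_j], which form an admissible family;
   by the lower estimate sum_j |E_j x|_T <= 2 |x|_T of Tsirelson's norm, the T^* norm
   of that row is at most twice its largest block.  Keeping in each row only one block
   realising that maximum gives disjointly supported vectors again, hence the bound
   2 D_M max |a_j|, and 3 D_M max |a_j| in total. *)

Set Implicit Arguments.
Unset Strict Implicit.
Unset Printing Implicit Defensive.

Import Order.TTheory GRing.Theory Num.Theory numFieldNormedType.Exports.
Local Open Scope ring_scope.
Local Open Scope classical_set_scope.

Section TsirelsonNorm.
Variable R : realType.
Implicit Types (u v x : vec R) (c : R) (E : seq nat) (Es : seq (seq nat)).

Definition supp_lt N u := forall i, (N <= i)%N -> u i = 0.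

Definition norm1 N u : R := \sum_(i < N) `|u i|.

Lemma supp_lt_restr N E u : supp_lt N u -> supp_lt N (restr E u).
Proof. by move=> uN i iN; rewrite /restr uN //; case: ifP. Qed.

Lemma norm1_ge0 N u : 0 <= norm1 N u.
Proof. exact: sumr_ge0. Qed.

Lemma abs_le_norm1 N u i : supp_lt N u -> `|u i| <= norm1 N u.
Proof.
move=> uN; have [iN|Ni] := ltnP i N; last by rewrite uN // normr0 norm1_ge0.
by rewrite /norm1 (bigD1 (Ordinal iN)) //= lerDl sumr_ge0.
Qed.

Lemma has_sup_abs N u : supp_lt N u -> has_sup [set `|u i| | i in [set: nat]].
Proof.
move=> uN; split; first by exists `|u 0%N|, 0%N.
by exists (norm1 N u) => _ [i _ <-]; apply: abs_le_norm1.
Qed.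

Lemma abs_le_norm_inf N u i : supp_lt N u -> `|u i| <= norm_inf u.
Proof. by move=> /has_sup_abs/sup_upper_bound; apply; exists i. Qed.

Lemma admissible_behead E Es : admissible (E :: Es) -> admissible Es.
Proof.
case=> size_le ordered; split=> [F FEs e eF|j1 j2 /andP[j12 j2s]].
  by apply: leq_trans (leqnSn _) (size_le F _ e eF); rewrite inE FEs orbT.
by apply: (ordered j1.+1 j2.+1); rewrite /= !ltnS j12.
Qed.

Lemma sum_mem_admissible_le Es i c : 0 <= c -> admissible Es ->
  \sum_(E <- Es) (if i \in E then c else 0) <= c.
Proof.
move=> c0; elim: Es => [|E Es IH] Es_adm; first by rewrite big_nil.
rewrite big_cons; case: ifPn => iE; last first.
  by rewrite add0r IH //; apply: admissible_behead Es_adm.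
rewrite big1_seq ?addr0 // => F /andP[_ /(nthP [::])[j jEs <-]].
case: ifPn => // iF; have [_ ordered] := Es_adm.
have lt0j : (0 < j.+1 < size (E :: Es))%N by rewrite /= ltnS jEs.
by have := ordered _ _ lt0j i i iE iF; rewrite ltnn.
Qed.

Lemma sum_norm1_restr_le N Es u : admissible Es ->
  \sum_(E <- Es) norm1 N (restr E u) <= norm1 N u.
Proof.
move=> Es_adm; rewrite /norm1 exchange_big /=; apply: ler_sum => i _.
apply: le_trans (sum_mem_admissible_le i (normr_ge0 (u i)) Es_adm).
by apply: ler_sum => E _; rewrite /restr; case: ifP; rewrite ?normr0.
Qed.

Definition admissible_sums m u : set R :=
  [set \sum_(E <- Es) normT_iter m (restr E u) | Es in admissible].

Lemma normT_iterS m u :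
  normT_iter m.+1 u = Num.max (norm_inf u) (2^-1 * sup (admissible_sums m u)).
Proof. by []. Qed.

Lemma admissible_sums_neq0 m u : admissible_sums m u !=set0.
Proof.
exists 0, [::]; last by rewrite big_nil.
by split=> // j1 j2; rewrite andbF.
Qed.

Lemma norm_inf_le_norm1 N u : supp_lt N u -> norm_inf u <= norm1 N u.
Proof.
by move=> uN; apply: ge_sup => [|_ [i _ <-]]; [exists `|u 0%N|, 0%N | exact: abs_le_norm1].
Qed.

Lemma admissible_sums_le_norm1 m N u :
  (forall v, supp_lt N v -> normT_iter m v <= norm1 N v) -> supp_lt N u ->
  ubound (admissible_sums m u) (norm1 N u).
Proof.
move=> iter_le uN _ [Es Es_adm <-]; apply: le_trans (sum_norm1_restr_le N u Es_adm).
by apply: ler_sum => E _; apply/iter_le/supp_lt_restr.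
Qed.

Lemma normT_iter_le_norm1 m N u : supp_lt N u -> normT_iter m u <= norm1 N u.
Proof.
elim: m u => [|m IH] u uN; first exact: norm_inf_le_norm1.
have sup_le : sup (admissible_sums m u) <= norm1 N u.
  exact: ge_sup (admissible_sums_neq0 m u) (admissible_sums_le_norm1 IH uN).
rewrite normT_iterS ge_max norm_inf_le_norm1 //=.
apply: le_trans (ler_wpM2l _ sup_le) _; first by rewrite invr_ge0.
by rewrite ler_pdivrMl // ler_peMl ?ler1n ?norm1_ge0.
Qed.

Lemma has_sup_admissible_sums m N u : supp_lt N u -> has_sup (admissible_sums m u).
Proof.
move=> uN; split; first exact: admissible_sums_neq0.
by exists (norm1 N u); apply: admissible_sums_le_norm1 uN => v; apply: normT_iter_le_norm1.
Qed.

Lemma le_sup_admissible_sums m N u Es : supp_lt N u -> admissible Es ->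
  \sum_(E <- Es) normT_iter m (restr E u) <= sup (admissible_sums m u).
Proof.
by move=> uN Es_adm; apply: sup_upper_bound (has_sup_admissible_sums m uN) _ _; exists Es.
Qed.

Lemma norm_inf_dom N c u v : 0 <= c -> supp_lt N u ->
  (forall i, `|v i| <= c * `|u i|) -> norm_inf v <= c * norm_inf u.
Proof.
move=> c0 uN vu; apply: ge_sup => [|_ [i _ <-]]; first by exists `|v 0%N|, 0%N.
by apply: le_trans (vu i) _; rewrite ler_wpM2l // (abs_le_norm_inf _ uN).
Qed.

Lemma normT_iter_dom m N c u v : 0 <= c -> supp_lt N u ->
  (forall i, `|v i| <= c * `|u i|) -> normT_iter m v <= c * normT_iter m u.
Proof.
move=> c0; elim: m u v => [|m IH] u v uN vu; first exact: (norm_inf_dom c0 uN vu).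
rewrite !normT_iterS ge_max; apply/andP; split.
  by apply: le_trans (norm_inf_dom c0 uN vu) _; rewrite ler_wpM2l // le_max lexx.
apply: le_trans (_ : c * (2^-1 * sup (admissible_sums m u)) <= _); last first.
  by rewrite ler_wpM2l // le_max lexx orbT.
rewrite mulrCA ler_wpM2l ?invr_ge0 //.
apply: ge_sup => [|_ [Es Es_adm <-]]; first exact: admissible_sums_neq0.
apply: le_trans (_ : c * \sum_(E <- Es) normT_iter m (restr E u) <= _).
  rewrite mulr_sumr; apply: ler_sum => E _; apply: IH; first exact: supp_lt_restr.
  by move=> i; rewrite /restr; case: ifP; rewrite ?normr0 ?mulr0.
by rewrite ler_wpM2l // (le_sup_admissible_sums _ uN Es_adm).
Qed.

Lemma normT_iter_leS m N u : supp_lt N u -> normT_iter m u <= normT_iter m.+1 u.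
Proof.
elim: m u => [|m IH] u uN; first by rewrite normT_iterS le_max lexx.
rewrite [normT_iter m.+2 u]normT_iterS normT_iterS le_max2 // ler_wpM2l ?invr_ge0 //.
apply: ge_sup => [|_ [Es Es_adm <-]]; first exact: admissible_sums_neq0.
apply: le_trans (_ : \sum_(E <- Es) normT_iter m.+1 (restr E u) <= _).
  by apply: ler_sum => E _; apply/IH/supp_lt_restr.
exact: le_sup_admissible_sums _ uN Es_adm.
Qed.

Lemma has_sup_normT_iter N u : supp_lt N u -> has_sup (range (fun m => normT_iter m u)).
Proof.
move=> uN; split; first by exists (normT_iter 0 u), 0%N.
by exists (norm1 N u) => _ [m _ <-]; apply: normT_iter_le_norm1.
Qed.

Lemma normT_iter_le_normT m N u : supp_lt N u -> normT_iter m u <= normT u.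
Proof. by move=> /has_sup_normT_iter/sup_upper_bound; apply; exists m. Qed.

Lemma normT_le_norm1 N u : supp_lt N u -> normT u <= norm1 N u.
Proof.
move=> uN; apply: ge_sup => [|_ [m _ <-]]; first by exists (normT_iter 0 u), 0%N.
exact: normT_iter_le_norm1.
Qed.

Lemma abs_le_normT N u i : supp_lt N u -> `|u i| <= normT u.
Proof.
by move=> uN; apply: le_trans (abs_le_norm_inf i uN) (normT_iter_le_normT 0 uN).
Qed.

Lemma normT_ge0 N u : supp_lt N u -> 0 <= normT u.
Proof. by move=> uN; apply: le_trans (abs_le_normT 0 uN). Qed.

Lemma normT_dom N c u v : 0 <= c -> supp_lt N u ->
  (forall i, `|v i| <= c * `|u i|) -> normT v <= c * normT u.
Proof.
move=> c0 uN vu; apply: ge_sup => [|_ [m _ <-]]; first by exists (normT_iter 0 v), 0%N.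
apply: le_trans (normT_iter_dom m c0 uN vu) _.
by rewrite ler_wpM2l // (normT_iter_le_normT m uN).
Qed.

Lemma sum_sup_le (I : Type) (s : seq I) (F : I -> nat -> R) b :
  (forall i, nondecreasing_seq (F i)) -> (forall i, has_ubound (range (F i))) ->
  (forall m, \sum_(i <- s) F i m <= b) -> \sum_(i <- s) sup (range (F i)) <= b.
Proof.
move=> F_nd F_ub sum_le.
have F_cvg i : xpredT i -> F i @ \oo --> sup (range (F i)).
  by move=> _; apply: nondecreasing_cvgn.
apply: ler_cvg_to (cvg_big add_continuous _ F_cvg) (cvg_cst b) _.
exact: nearW.
Qed.

(* The defining inequality of [normT_iter m.+1] passes to the limit because the
   iterates are nondecreasing in [m]. *)
Lemma normT_lower N x Es : supp_lt N x -> admissible Es ->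
  \sum_(E <- Es) normT (restr E x) <= 2 * normT x.
Proof.
move=> xN Es_adm.
apply: (sum_sup_le (F := fun E m => normT_iter m (restr E x))) => [E|E|m].
- by apply/nondecreasing_seqP => m; apply: normT_iter_leS (supp_lt_restr E xN).
- by case: (has_sup_normT_iter (supp_lt_restr E xN)).
rewrite -ler_pdivrMl // (le_trans _ (normT_iter_le_normT m.+1 xN)) //.
by rewrite normT_iterS le_max ler_wpM2l ?invr_ge0 ?(le_sup_admissible_sums _ xN) ?orbT.
Qed.

End TsirelsonNorm.

Section DualNorm.
Variable R : realType.
Implicit Types (x u y : vec R) (c : R).

Lemma sum_abs_le_norm1 N L y : supp_lt L y -> \sum_(i < N) `|y i| <= norm1 L y.
Proof.
move=> yL; rewrite /norm1 -!(big_mkord xpredT (fun i => `|y i|)); have [NL|LN] := leqP N L.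
  by rewrite (big_cat_nat (leq0n N) NL) /= lerDl sumr_ge0.
rewrite (big_cat_nat (leq0n L) (ltnW LN)) /= [X in _ + X]big1_seq ?addr0 // => i.
by rewrite mem_index_iota => /andP[_ /andP[Li _]]; rewrite yL ?normr0.
Qed.

Lemma Ts_set0 y : Ts_set y 0.
Proof.
exists (0%N, fun=> 0); last by rewrite /= big_ord0 normr0.
split=> //=; apply: le_trans (normT_le_norm1 (N := 0) _) _ => //.
by rewrite /norm1 big_ord0.
Qed.

Lemma normTs_ge0 y : 0 <= normTs y.
Proof.
have [y_sup|] := pselect (has_sup (Ts_set y)); last by rewrite /normTs => /sup_out ->.
exact: sup_upper_bound y_sup _ (Ts_set0 y).
Qed.

Lemma normTs_le y b :
  (forall N x, supp_lt N x -> normT x <= 1 -> `|\sum_(i < N) x i * y i| <= b) ->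
  normTs y <= b.
Proof.
move=> y_le; apply: ge_sup => [|_ [[N x] [xN x1] <-]]; last exact: y_le.
by exists 0; apply: Ts_set0.
Qed.

Lemma pairing_le_normTs y N x : inTs y -> supp_lt N x -> normT x <= 1 ->
  `|\sum_(i < N) x i * y i| <= normTs y.
Proof.
move=> y_ub xN x1; apply: sup_upper_bound; last by exists (N, x).
by split; [exists 0; apply: Ts_set0|].
Qed.

Lemma supp_lt_inTs L y : supp_lt L y -> inTs y.
Proof.
move=> yL; exists (norm1 L y) => _ [[N x] [/= xN x1] <-].
apply: le_trans (ler_norm_sum _ _ _) (le_trans _ (sum_abs_le_norm1 N yL)).
apply: ler_sum => i _; rewrite normrM ler_piMl //.
exact: le_trans (abs_le_normT i xN) x1.
Qed.

Lemma pairing_le y N u : inTs y -> supp_lt N u ->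
  `|\sum_(i < N) u i * y i| <= normT u * normTs y.
Proof.
move=> y_ub uN; have [u0|u_neq0] := eqVneq (normT u) 0.
  rewrite u0 mul0r big1 ?normr0 // => i _.
  by have := abs_le_normT i uN; rewrite u0 normr_le0 => /eqP ->; rewrite mul0r.
have u_gt0 : 0 < normT u by rewrite lt_def u_neq0 (normT_ge0 uN).
rewrite -ler_pdivrMl // -[X in X * _]ger0_norm ?invr_ge0 ?(normT_ge0 uN) // -normrM.
rewrite mulr_sumr; under eq_bigr => i _ do rewrite mulrA.
apply: (pairing_le_normTs (x := fun i => (normT u)^-1 * u i)) => //.
  by move=> i iN; rewrite uN ?mulr0.
apply: le_trans (normT_dom (c := (normT u)^-1) _ uN _) _; rewrite ?invr_ge0 ?(normT_ge0 uN) //.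
  by move=> i; rewrite normrM ger0_norm ?invr_ge0 ?(normT_ge0 uN).
by rewrite mulVf.
Qed.

Lemma normTs0 y : y =1 (fun=> 0) -> normTs y = 0.
Proof.
move=> y0; apply/le_anti; rewrite normTs_ge0 andbT; apply: normTs_le => N x _ _.
by rewrite big1 ?normr0 // => i _; rewrite y0 mulr0.
Qed.

Lemma normTs_neq0 y : normTs y != 0 -> exists i, y i != 0.
Proof.
move=> /eqP y_neq0; apply: contrapT => y0; apply/y_neq0/normTs0 => i.
by apply/eqP/contraT => yi; case: y0; exists i.
Qed.

Lemma normTs_sum m (Y : nat -> vec R) : (forall t, (t < m)%N -> inTs (Y t)) ->
  normTs (fun s => \sum_(t < m) Y t s) <= \sum_(t < m) normTs (Y t).
Proof.
move=> Y_ub; apply: normTs_le => N x xN x1.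
under eq_bigr => i _ do rewrite mulr_sumr.
rewrite exchange_big /=; apply: le_trans (ler_norm_sum _ _ _) _.
by apply: ler_sum => t _; apply: pairing_le_normTs => //; apply: Y_ub.
Qed.

Lemma normTs_add y y' : inTs y -> inTs y' ->
  normTs (fun s => y s + y' s) <= normTs y + normTs y'.
Proof.
move=> y_ub y'_ub; apply: normTs_le => N x xN x1.
under eq_bigr => i _ do rewrite mulrDr.
rewrite big_split /=; apply: le_trans (ler_normD _ _) _.
by apply: lerD; apply: pairing_le_normTs.
Qed.

Lemma normTs_dom c y y' : 0 <= c -> inTs y' ->
  (forall i, `|y i| <= c * `|y' i|) -> normTs y <= c * normTs y'.
Proof.
move=> c0 y'_ub yy'; apply: normTs_le => N x xN x1.
(* [x'] has the modulus of [x] and the signs of [y'], so its pairing with [y'] has no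
   cancellation. *)
pose x' i := if 0 <= y' i then `|x i| else - `|x i|.
have x'x i : `|x' i| = `|x i| by rewrite /x'; case: ifP; rewrite ?normrN normr_id.
have x'N : supp_lt N x' by move=> i iN; apply/normr0_eq0; rewrite x'x xN ?normr0.
have x'1 : normT x' <= 1.
  apply: le_trans (normT_dom (c := 1) ler01 xN _) _; last by rewrite mul1r.
  by move=> i; rewrite mul1r x'x.
apply: le_trans (ler_norm_sum _ _ _) _.
apply: le_trans (_ : _ <= c * \sum_(i < N) x' i * y' i) _.
  rewrite mulr_sumr; apply: ler_sum => i _; rewrite normrM.
  apply: le_trans (ler_wpM2l (normr_ge0 _) (yy' i)) _.
  rewrite mulrCA ler_wpM2l // /x'; case: ifP => y'_ge0; first by rewrite (ger0_norm y'_ge0).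
  by rewrite [`|y' i|]ltr0_norm ?mulrN ?mulNr // ltNge y'_ge0.
by rewrite ler_wpM2l // (le_trans (ler_norm _)) // pairing_le_normTs.
Qed.

Lemma normTs_mono y y' : inTs y' -> (forall i, `|y i| <= `|y' i|) -> normTs y <= normTs y'.
Proof.
move=> y'_ub yy'; rewrite -[leRHS]mul1r.
by apply: normTs_dom => // i; rewrite mul1r.
Qed.

Lemma supp_lt_sum m L (Y : nat -> vec R) : (forall t, (t < m)%N -> supp_lt L (Y t)) ->
  supp_lt L (fun i => \sum_(t < m) Y t i).
Proof. by move=> YL i iL; rewrite big1 // => t _; apply: YL. Qed.

Lemma normTs_admissible_sum_le m L (E : nat -> seq nat) (Y : nat -> vec R) :
  admissible (map E (iota 0 m)) -> (forall t, (t < m)%N -> supp_lt L (Y t)) ->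
  (forall t s, (t < m)%N -> Y t s != 0 -> s \in E t) ->
  normTs (fun s => \sum_(t < m) Y t s) <= 2 * \big[Num.max/0]_(t < m) normTs (Y t).
Proof.
move=> E_adm YL YE; set M := \big[Num.max/0]_(t < m) normTs (Y t).
apply: normTs_le => N x xN x1.
have restr_pairing (t : 'I_m) :
    \sum_(i < N) x i * Y t i = \sum_(i < N) restr (E t) x i * Y t i.
  apply: eq_bigr => i _; rewrite /restr; case: ifPn => // iE.
  have [->|/(YE t i (ltn_ord t))] := eqVneq (Y t i) 0; first by rewrite !mulr0.
  by rewrite (negbTE iE).
under eq_bigr => i _ do rewrite mulr_sumr.
rewrite exchange_big /=; under eq_bigr => t _ do rewrite restr_pairing.
apply: le_trans (ler_norm_sum _ _ _) _.
apply: le_trans (_ : _ <= \sum_(t < m) normT (restr (E t) x) * M) _.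
  apply: ler_sum => t _; have xEN := supp_lt_restr (E t) xN.
  apply: le_trans (pairing_le (supp_lt_inTs (YL t (ltn_ord t))) xEN) _.
  by rewrite ler_wpM2l ?(normT_ge0 xEN) // (le_bigmax _ (fun t : 'I_m => normTs (Y t))).
rewrite -mulr_suml ler_wpM2r ?bigmax_ge_id //.
have -> : \sum_(t < m) normT (restr (E t) x) = \sum_(F <- map E (iota 0 m)) normT (restr F x).
  by rewrite big_map -(big_mkord xpredT (fun t => normT (restr (E t) x))) /index_iota subn0.
apply: le_trans (normT_lower xN E_adm) _.
by rewrite -[leRHS]mulr1 ler_wpM2l.
Qed.

End DualNorm.

Lemma bigmax_disjoint_sum (R : realType) m (q : nat -> vec R) :
  (0 < m)%N -> (forall t i, 0 <= q t i) ->
  exists r : nat -> vec R,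
    [/\ forall i, \big[Num.max/0]_(t < m) q t i = \sum_(t < m) r t i,
        forall t i, r t i = 0 \/ r t i = q t i &
        forall t1 t2 i, r t1 i != 0 -> r t2 i != 0 -> t1 = t2].
Proof.
move=> m_gt0 q_ge0; pose ts i := [arg max_(t > Ordinal m_gt0 | true) q t i]%O.
exists (fun t i => if ts i == t :> nat then q t i else 0); split.
- move=> i; rewrite (bigmax_eq_arg _ (Ordinal m_gt0)) // (bigD1 (ts i)) //= eqxx.
  rewrite big1 ?addr0 // => t t_neq; case: eqP => // ts_t.
  by move: t_neq; rewrite (val_inj ts_t) eqxx.
- by move=> t i; case: eqP; [right | left].
- by move=> t1 t2 i; do 2 case: ifP => [/eqP <-|_]; rewrite ?eqxx.
Qed.

Section BlockEstimates.
Variable R : realType.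

Definition supp2_lt L (w : nat -> vec R) :=
  forall i s, ((L <= i) || (L <= s))%N -> w i s = 0.

Lemma supp2_lt_row L w i : supp2_lt L w -> supp_lt L (w i).
Proof. by move=> wL s sL; rewrite wL // sL orbT. Qed.

Lemma supp2_lt_rows L w : supp2_lt L w -> supp_lt L (fun i => normTs (w i)).
Proof. by move=> wL i iL; apply: normTs0 => s; rewrite wL ?iL. Qed.

Lemma supp2_lt_inTs L w i : supp2_lt L w -> inTs (w i).
Proof. by move/(supp2_lt_row i)/supp_lt_inTs. Qed.

Lemma supp2_lt_inTs_rows L w : supp2_lt L w -> inTs (fun i => normTs (w i)).
Proof. by move/supp2_lt_rows/supp_lt_inTs. Qed.

Lemma supp2_lt_sum m L (Y : nat -> nat -> vec R) :
  (forall t, (t < m)%N -> supp2_lt L (Y t)) -> supp2_lt L (fun i s => \sum_(t < m) Y t i s).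
Proof. by move=> YL i s iLs; rewrite big1 // => t _; apply: YL. Qed.

Lemma in_PR_TTs_supp (Rs : nat -> nat -> bool) (w : nat -> vec R) i s :
  in_PR_TTs Rs w -> w i s != 0 -> Rs i s.
Proof. by case=> w' [_ ->]; rewrite /PR; case: ifP; rewrite ?eqxx. Qed.

Lemma supp2_lt_dom L c (w w' : nat -> vec R) : supp2_lt L w' ->
  (forall i s, `|w i s| <= c * `|w' i s|) -> supp2_lt L w.
Proof.
move=> w'L ww' i s iLs; apply/eqP; rewrite -normr_le0.
by have := ww' i s; rewrite w'L // normr0 mulr0.
Qed.

Lemma normTTs_dom L c w w' : 0 <= c -> supp2_lt L w' ->
  (forall i s, `|w i s| <= c * `|w' i s|) -> normTTs w <= c * normTTs w'.
Proof.
move=> c0 w'L ww'; apply: normTs_dom (supp2_lt_inTs_rows w'L) _ => // i.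
rewrite !ger0_norm ?normTs_ge0 //.
exact: normTs_dom c0 (supp2_lt_inTs i w'L) (ww' i).
Qed.

Lemma normTTs_add L w w' : supp2_lt L w -> supp2_lt L w' ->
  normTTs (fun i s => w i s + w' i s) <= normTTs w + normTTs w'.
Proof.
move=> wL w'L.
apply: le_trans (normTs_add (supp2_lt_inTs_rows wL) (supp2_lt_inTs_rows w'L)).
apply: normTs_mono => [|i].
  apply: (supp_lt_inTs (L := L)) => i iL.
  by rewrite (supp2_lt_rows wL iL) (supp2_lt_rows w'L iL) addr0.
rewrite !ger0_norm ?addr_ge0 ?normTs_ge0 //.
exact: normTs_add (supp2_lt_inTs i wL) (supp2_lt_inTs i w'L).
Qed.

Variable DM : R.
Hypothesis DM_ge0 : 0 <= DM.

Definition admissible_upper_estimate : Prop :=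
  forall (n : nat) (x : nat -> nat -> R),
    (forall k, (k < n)%N -> inTs (x k)) ->
    (forall k1 k2, (k1 < n)%N -> (k2 < n)%N -> k1 <> k2 ->
       forall i, x k1 i = 0 \/ x k2 i = 0) ->
    (forall k i, (k < n)%N -> x k i != 0 -> (n <= i.+1)%N) ->
    normTs (fun i => \sum_(k < n) x k i) <= DM * \big[Num.max/0]_(k < n) normTs (x k).

Hypothesis DM_upper : admissible_upper_estimate.

Lemma normTTs_disjoint_rows m L (Y : nat -> nat -> vec R) :
  (forall t, (t < m)%N -> supp2_lt L (Y t)) ->
  (forall t1 t2 i s1 s2, (t1 < m)%N -> (t2 < m)%N ->
     Y t1 i s1 != 0 -> Y t2 i s2 != 0 -> t1 = t2) ->
  (forall t i s, (t < m)%N -> Y t i s != 0 -> (m <= i.+1)%N) ->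
  normTTs (fun i s => \sum_(t < m) Y t i s) <= DM * \big[Num.max/0]_(t < m) normTTs (Y t).
Proof.
move=> YL Y_rows Y_low; pose p t i := normTs (Y t i).
have pL t : (t < m)%N -> supp_lt L (p t) by move=> tm; apply/supp2_lt_rows/YL.
have p_disj t1 t2 : (t1 < m)%N -> (t2 < m)%N -> t1 <> t2 ->
    forall i, p t1 i = 0 \/ p t2 i = 0.
  move=> t1m t2m t12 i; have [|/normTs_neq0[s1 Y1]] := eqVneq (p t1 i) 0; first by left.
  right; apply: normTs0 => s2; apply/eqP/contraT => Y2.
  by case: t12; apply: Y_rows _ _ _ _ _ t1m t2m Y1 Y2.
have p_low t i : (t < m)%N -> p t i != 0 -> (m <= i.+1)%N.
  by move=> tm /normTs_neq0[s]; apply: Y_low.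
apply: le_trans (DM_upper (fun t tm => supp_lt_inTs (pL t tm)) p_disj p_low).
apply: normTs_mono => [|i]; first exact/supp_lt_inTs/supp_lt_sum/pL.
rewrite !ger0_norm ?sumr_ge0 ?normTs_ge0 // => [|t _]; last exact: normTs_ge0.
by apply: (normTs_sum (Y := fun t => Y t i)) => t tm; apply: supp2_lt_inTs (YL t tm).
Qed.

Lemma normTTs_admissible_columns m L (E : nat -> seq nat) (Y : nat -> nat -> vec R) :
  (0 < m)%N -> admissible (map E (iota 0 m)) ->
  (forall t, (t < m)%N -> supp2_lt L (Y t)) ->
  (forall t i s, (t < m)%N -> Y t i s != 0 -> s \in E t) ->
  (forall t i s, (t < m)%N -> Y t i s != 0 -> (m <= i.+1)%N) ->
  normTTs (fun i s => \sum_(t < m) Y t i s) <= 2 * DM * \big[Num.max/0]_(t < m) normTTs (Y t).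
Proof.
move=> m_gt0 E_adm YL YE Y_low.
have [r [r_sum r_sel r_disj]] :=
  bigmax_disjoint_sum (q := fun t i => normTs (Y t i)) m_gt0 (fun t i => normTs_ge0 _).
have rL t : (t < m)%N -> supp_lt L (r t).
  by move=> tm i iL; case: (r_sel t i) => ->; rewrite ?(supp2_lt_rows (YL t tm) iL).
have r_low t i : (t < m)%N -> r t i != 0 -> (m <= i.+1)%N.
  move=> tm; case: (r_sel t i) => ->; first by rewrite eqxx.
  by move/normTs_neq0 => [s]; apply: Y_low.
have r_sep t1 t2 : (t1 < m)%N -> (t2 < m)%N -> t1 <> t2 ->
    forall i, r t1 i = 0 \/ r t2 i = 0.
  move=> _ _ t12 i; have [|r1] := eqVneq (r t1 i) 0; first by left.
  by right; apply/eqP/contraT => r2; case: t12; apply: r_disj r1 r2.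
have r_le t : (t < m)%N -> normTs (r t) <= normTTs (Y t).
  move=> tm; apply: normTs_mono (supp2_lt_inTs_rows (YL t tm)) _ => i.
  by case: (r_sel t i) => ->; rewrite ?normr0 ?normr_ge0.
apply: le_trans (_ : _ <= 2 * normTs (fun i => \sum_(t < m) r t i)) _.
  apply: normTs_dom => // [|i]; first exact/supp_lt_inTs/supp_lt_sum/rL.
  rewrite -r_sum !ger0_norm ?bigmax_ge_id ?normTs_ge0 //.
  apply: (normTs_admissible_sum_le (L := L) (Y := fun t => Y t i)) E_adm _ _.
    by move=> t tm; apply: supp2_lt_row (YL t tm).
  by move=> t s tm; apply: YE.
rewrite -mulrA ler_wpM2l //.
apply: le_trans (DM_upper (fun t tm => supp_lt_inTs (rL t tm)) r_sep r_low) _.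
by rewrite ler_wpM2l //; apply: le_bigmax2 => t _; apply: r_le.
Qed.

End BlockEstimates.

Section BlockDecomposition.
Variables (R : realType) (DM : R) (k : nat) (n : nat -> nat).
Variables (z : nat -> nat -> vec R) (a : nat -> R).
Hypothesis DM_ge0 : 0 <= DM.
Hypothesis DM_upper : admissible_upper_estimate DM.
Hypothesis k_gt0 : (0 < k)%N.
Hypothesis n0 : n 0%N = k.
Hypothesis n_lt : forall j, (j < k)%N -> (n j < n j.+1)%N.
Hypothesis z_supp : forall t i s, (t < k)%N -> z t.+1 i s != 0 ->
  Rbox k (n t.+1) i s && ~~ Rbox k (n t) i s.
Hypothesis z_le1 : forall t, (t < k)%N -> normTTs (z t.+1) <= 1.

(* In the paper's indices, with j = t + 1: [row_block t] is the part of a_j z_j in the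
   rows (n_{j-1}, n_j], and [col_block t] the remaining part, which lies in the rows
   at most n_{j-1} and the columns (n_{j-1}, n_j]. *)
Definition row_block t i s := if (n t <= i)%N then a t.+1 * z t.+1 i s else 0.
Definition col_block t i s := if (n t <= i)%N then 0 else a t.+1 * z t.+1 i s.

Lemma n_homo i j : (i <= j <= k)%N -> (n i <= n j)%N.
Proof.
case/andP=> ij jk.
have n_homo_in : {in [pred i | (i <= k)%N] &, {homo n : i j / (i <= j)%N}}.
  apply: homo_leq_in leqnn leq_trans _ _ => [x y _ yk w /andP[_ /ltnW wy]|x _ x1k].
    by rewrite inE (leq_trans wy yk).
  exact/ltnW/n_lt.
by apply: n_homo_in; rewrite ?inE ?(leq_trans ij jk).
Qed.

Lemma n_ge t : (t <= k)%N -> (k <= n t)%N.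
Proof. by move=> tk; rewrite -{1}n0 n_homo. Qed.

Lemma z_supp2 t : (t < k)%N -> supp2_lt (n k) (z t.+1).
Proof.
move=> tk i s; apply: contraTeq => /(z_supp tk)/andP[/andP[/andP[_ i_lt] s_lt] _].
have nk : (n t.+1 <= n k)%N by apply: n_homo; rewrite tk leqnn.
by rewrite negb_or -!ltnNge (leq_trans i_lt nk) (leq_trans s_lt nk).
Qed.

Lemma row_block_supp t i s : (t < k)%N -> row_block t i s != 0 -> (n t <= i < n t.+1)%N.
Proof.
rewrite /row_block; case: ifP => [nt_le tk|]; last by rewrite eqxx.
by rewrite mulf_eq0 negb_or => /andP[_ /(z_supp tk)/andP[/andP[/andP[_ ->] _] _]] //; rewrite nt_le.
Qed.

Lemma col_block_supp t i s : (t < k)%N -> col_block t i s != 0 ->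
  (k <= i)%N && (n t <= s < n t.+1)%N.
Proof.
rewrite /col_block; case: (leqP (n t) i) => [_|i_lt tk]; first by rewrite eqxx.
rewrite mulf_eq0 negb_or => /andP[_ /(z_supp tk)].
rewrite /Rbox i_lt andbT => /andP[/andP[/andP[ki _] s_lt] s_ge].
by move: s_ge; rewrite ki s_lt andbT /= -leqNgt.
Qed.

Lemma block_index_uniq t1 t2 i : (t1 < k)%N -> (t2 < k)%N ->
  (n t1 <= i < n t1.+1)%N -> (n t2 <= i < n t2.+1)%N -> t1 = t2.
Proof.
move=> t1k t2k /andP[l1 u1] /andP[l2 u2]; have [t12|t21|//] := ltngtP t1 t2.
  by have := n_homo (i := t1.+1) (j := t2); rewrite t12 ltnW //; lia.
by have := n_homo (i := t2.+1) (j := t1); rewrite t21 ltnW //; lia.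
Qed.

Lemma blocks_admissible : admissible (map (fun t => iota (n t) (n t.+1 - n t)) (iota 0 k)).
Proof.
split=> [F /mapP[t] | j1 j2].
  rewrite mem_iota size_map size_iota => /andP[_ tk] -> e; rewrite mem_iota => /andP[nt_e _].
  by have := n_ge (ltnW tk); lia.
rewrite size_map size_iota => /andP[j12 j2k] x y; have j1k := ltn_trans j12 j2k.
rewrite !(nth_map 0%N) ?size_iota // !nth_iota // !add0n !mem_iota.
have := n_lt j1k; have := n_homo (i := j1.+1) (j := j2); rewrite j12 ltnW //; lia.
Qed.

Lemma block_normTTs_le t w : (t < k)%N ->
  (forall i s, `|w i s| <= `|a t.+1| * `|z t.+1 i s|) ->
  normTTs w <= \big[Num.max/0]_(1 <= j < k.+1) `|a j|.
Proof.
move=> tk wz; apply: le_trans (normTTs_dom (normr_ge0 _) (z_supp2 tk) wz) _.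
apply: le_trans (_ : `|a t.+1| * 1 <= _); first by rewrite ler_wpM2l ?z_le1.
rewrite mulr1; apply: (le_bigmax_seq 0 t.+1 xpredT (fun j => `|a j|)) => //.
by rewrite mem_index_iota.
Qed.

Lemma row_block_dom t i s : `|row_block t i s| <= `|a t.+1| * `|z t.+1 i s|.
Proof. by rewrite /row_block; case: ifP; rewrite ?normrM ?normr0 ?mulr_ge0. Qed.

Lemma col_block_dom t i s : `|col_block t i s| <= `|a t.+1| * `|z t.+1 i s|.
Proof. by rewrite /col_block; case: ifP; rewrite ?normrM ?normr0 ?mulr_ge0. Qed.

Lemma combination_split i s : \sum_(1 <= j < k.+1) a j * z j i s =
  \sum_(t < k) row_block t i s + \sum_(t < k) col_block t i s.
Proof.
rewrite -big_split big_add1 /= big_mkord; apply: eq_bigr => t _.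
by rewrite /row_block /col_block; case: ifP; rewrite ?addr0 ?add0r.
Qed.

Lemma row_blocks_le :
  normTTs (fun i s => \sum_(t < k) row_block t i s) <=
    DM * \big[Num.max/0]_(1 <= j < k.+1) `|a j|.
Proof.
apply: le_trans (normTTs_disjoint_rows DM_upper (L := n k) _ _ _) _.
- by move=> t tk; apply: supp2_lt_dom (z_supp2 tk) (row_block_dom t).
- move=> t1 t2 i s1 s2 t1k t2k /(row_block_supp t1k) i1 /(row_block_supp t2k) i2.
  exact: block_index_uniq t1k t2k i1 i2.
- move=> t i s tk /(row_block_supp tk)/andP[ni _].
  by have := n_ge (ltnW tk); lia.
rewrite ler_wpM2l //; apply: bigmax_le => [|t _]; first exact: bigmax_ge_id.
exact: block_normTTs_le (ltn_ord t) (row_block_dom t).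
Qed.

Lemma col_blocks_le :
  normTTs (fun i s => \sum_(t < k) col_block t i s) <=
    2 * DM * \big[Num.max/0]_(1 <= j < k.+1) `|a j|.
Proof.
apply: le_trans (normTTs_admissible_columns DM_ge0 DM_upper k_gt0 blocks_admissible _ _ _) _.
- by move=> t tk; apply: supp2_lt_dom (z_supp2 tk) (col_block_dom t).
- move=> t i s tk /(col_block_supp tk)/andP[_ s_in].
  by have := n_lt tk; rewrite mem_iota; lia.
- by move=> t i s tk /(col_block_supp tk)/andP[ki _]; rewrite ltnW.
rewrite ler_wpM2l ?mulr_ge0 //; apply: bigmax_le => [|t _]; first exact: bigmax_ge_id.
exact: block_normTTs_le (ltn_ord t) (col_block_dom t).
Qed.

Lemma normTTs_combination_le :
  normTTs (fun i s => \sum_(1 <= j < k.+1) a j * z j i s) <=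
    3 * DM * \big[Num.max/0]_(1 <= j < k.+1) `|a j|.
Proof.
have blocks_supp2 (block : nat -> nat -> vec R) :
    (forall t i s, `|block t i s| <= `|a t.+1| * `|z t.+1 i s|) ->
    supp2_lt (n k) (fun i s => \sum_(t < k) block t i s).
  move=> block_dom; apply: supp2_lt_sum => t tk.
  exact: supp2_lt_dom (z_supp2 tk) (block_dom t).
under eq_fun => i do under eq_fun => s do rewrite combination_split.
apply: le_trans (normTTs_add (blocks_supp2 _ row_block_dom) (blocks_supp2 _ col_block_dom)) _.
apply: le_trans (lerD row_blocks_le col_blocks_le) _.
by rewrite [3]/(1 + 2) !mulrDl mul1r.
Qed.

End BlockDecomposition.

Theorem lemma4p11 (R : realType) (DM : R) (HDM0 : 0 < DM)
  (HDM : forall (n : nat) (x : nat -> nat -> R),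
     (forall k, (k < n)%N -> inTs (x k)) ->
     (forall k1 k2, (k1 < n)%N -> (k2 < n)%N -> k1 <> k2 ->
        forall i, x k1 i = 0 \/ x k2 i = 0) ->
     (forall k i, (k < n)%N -> x k i != 0 -> (n <= i.+1)%N) ->
     normTs (fun i => \sum_(k < n) x k i) <= DM * \big[Num.max/0]_(k < n) normTs (x k))
  (k : nat) (hk : (0 < k)%N) (n : nat -> nat) (hn0 : n 0%N = k)
  (hn : forall j, (j < k)%N -> (n j < n j.+1)%N)
  (z : nat -> nat -> nat -> R)
  (hz : forall j, (1 <= j <= k)%N ->
     in_PR_TTs (fun i s => Rbox k (n j) i s && ~~ Rbox k (n j.-1) i s) (z j))
  (hz1 : forall j, (1 <= j <= k)%N -> normTTs (z j) <= 1)
  (a : nat -> R) :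
  normTTs (fun i s => \sum_(1 <= j < k.+1) a j * z j i s)
    <= 3 * DM * \big[Num.max/0]_(1 <= j < k.+1) `|a j|.
Proof.
apply: normTTs_combination_le (ltW HDM0) HDM hk hn0 hn _ _ => [t i s tk|t tk].
  exact: in_PR_TTs_supp (hz t.+1 tk).
exact: hz1.
Qed.
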